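(* Let $k \ge 2$ be an integer. If $G$ is a connected twin-free graph with $n$ vertices and $i_{\max}(G) = k$, then $n \le 2^{k-1}+k-2$. Furthermore, equality holds only if the graph $G$ is formed by taking a clique $K_{k-1}$ and adding, for every non-empty vertex subset $S$ of this clique, a vertex whose neighbourhood is precisely $S$.
   Context: $i_{\max}(G)$ denotes the number of maximal independent sets of $G$. A graph is twin-free if no two vertices have the same open neighbourhood. *)

(* A simple graph is a symmetric irreflexive relation
   e : rel T on a finite type T (vertex set). *)
From mathcomp Require Import all_boot.
Set Implicit Arguments. Unset Strict Implicit. Unset Printing Implicit Defensive.

Section Graphs.
Variable T : finType.
Variable e : rel T.

Definition nbhd (x : T) : {set T} := [set y | e x y].

Definition independent (A : {set T}) : bool :=
  [forall x in A, forall y in A, ~~ e x y].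

Definition imax : nat := #|[set A : {set T} | maxset independent A]|.

Definition twin_free : Prop := forall x y : T, nbhd x = nbhd y -> x = y.

Definition connected_graph : Prop := forall x y : T, connect e x y.

Definition is_clique (C : {set T}) : bool :=
  [forall x in C, forall y in C, (x != y) ==> e x y].

Definition clique_with_all_subsets (C : {set T}) : Prop :=
  [/\ is_clique C,
      (forall v, v \notin C -> nbhd v \subset C /\ nbhd v != set0) &
      (forall S : {set T}, S \subset C -> S != set0 ->
         exists! v, v \notin C /\ nbhd v = S)].

End Graphs.

From mathcomp Require Import all_boot zify.
Set Implicit Arguments. Unset Strict Implicit. Unset Printing Implicit Defensive.

(** The maximal independent sets containing a vertex v form a set s v, and two
vertices are adjacent exactly when their sets are disjoint.  So s is an injective
(by twin-freeness) family of nonempty proper subsets of the k maximal independent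
sets with the Helly property: pairwise intersecting members have a common point.
The bound holds for every such family.

Fix a point x0 and replace each member by itself or its complement, whichever
avoids x0.  This lands among the 2^(k-1) - 1 nonempty sets avoiding x0, and two
members collide only if they are complementary.  To count complementary pairs,
count the distinct traces of the points on a complement-closed subfamily: Helly
provides majority points, and with them deleting a complementary pair always
loses a trace, so there are at most k - 1 pairs.  In the extremal case every
inequality is tight.  This forces the complementary pairs to be {i} and its
complement for all points i but one, c, and the family to consist of these
singletons and all proper sets containing c.  In the graph, the vertices outside
the maximal independent set c form the clique, and the neighbourhoods of the
vertices of c are exactly its nonempty subsets. *)

Definition majority (a b c : bool) := [|| a && b, a && c | b && c].

Lemma majorityN a b c : majority (~~ a) (~~ b) (~~ c) = ~~ majority a b c.
Proof. by case: a; case: b; case: c. Qed.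

Lemma majority_meet a b c a' b' c' :
  majority a b c -> majority a' b' c' -> [|| a && a', b && b' | c && c'].
Proof. by case: a; case: b; case: c; case: a'; case: b'; case: c'. Qed.

Lemma exists_sep (T : finType) (A B : {set T}) :
  A != B -> exists z, (z \in A) != (z \in B).
Proof.
move=> neqAB; apply/existsP; apply: contraNT neqAB => /existsPn sameAB.
by apply/eqP/setP => z; apply/eqP/negbNE.
Qed.

Section HellyFamily.
Variables (K V : finType) (s : V -> {set K}).
Hypothesis s_inj : injective s.
Hypothesis s_neq0 : forall v, s v != set0.
Hypothesis s_neqT : forall v, s v != setT.
Hypothesis s_helly : forall P : {set V},
  {in P &, forall u v, s u :&: s v != set0} ->
  exists t, forall v, v \in P -> t \in s v.

Definition complement_closed (J : {set V}) :=
  forall v, v \in J -> exists2 v', v' \in J & s v' = ~: s v.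

Definition trace (J : {set V}) (x : K) := [set v in J | x \in s v].

Definition ntraces (J : {set V}) := #|[set trace J x | x : K]|.

Lemma in_trace (J : {set V}) x v : (v \in trace J x) = (v \in J) && (x \in s v).
Proof. by rewrite inE. Qed.

Definition paired := [set v | [exists u, s u == ~: s v]].

Definition through (x : K) := [set v | x \in s v].

Lemma exists_mem v : exists x, x \in s v.
Proof. exact/set0Pn/s_neq0. Qed.

Lemma exists_nmem v : exists x, x \notin s v.
Proof.
have /subsetPn [x _ xNs] : ~~ (setT \subset s v) by rewrite subTset s_neqT.
by exists x.
Qed.

Lemma helly3 a b c x y z : x \in s a :&: s b -> y \in s a :&: s c -> z \in s b :&: s c ->
  exists t, [/\ t \in s a, t \in s b & t \in s c].
Proof.
move=> xab yac zbc.
have [|t tP] := s_helly (P := [set a; b; c]).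
  move=> u v; rewrite !inE -!orbA.
  case/or3P=> /eqP->; case/or3P=> /eqP->; rewrite ?setIid ?s_neq0 //; apply/set0Pn;
  by [exists x | exists y | exists z | rewrite setIC; by [exists x | exists y | exists z]].
by exists t; split; apply: tP; rewrite !inE eqxx ?orbT.
Qed.

Lemma majority_point (J : {set V}) x y z : complement_closed J ->
  exists t, {in J, forall v,
    (t \in s v) = majority (x \in s v) (y \in s v) (z \in s v)}.
Proof.
move=> closedJ; pose maj v := majority (x \in s v) (y \in s v) (z \in s v).
have [|t tP] := s_helly (P := [set v in J | maj v]).
  move=> u v; rewrite !inE => /andP[_ maj_u] /andP[_ maj_v]; apply/set0Pn.
  by case/or3P: (majority_meet maj_u maj_v) => /andP[];
    [exists x | exists y | exists z]; rewrite inE; apply/andP.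
exists t => v vJ; rewrite -/(maj v); case maj_v: (maj v); first by apply: tP; rewrite inE vJ.
have [v' v'J sv'] := closedJ v vJ.
have : t \in s v' by apply: tP; rewrite inE v'J /maj sv' !inE majorityN -/(maj v) maj_v.
by rewrite sv' inE => /negbTE.
Qed.

Lemma orient_separator (J : {set V}) l x y : complement_closed J -> l \in J ->
  (x \in s l) != (y \in s l) ->
  exists2 l0, l0 \in J & [/\ s l0 = s l \/ s l0 = ~: s l, x \in s l0 & y \notin s l0].
Proof.
move=> closedJ lJ; case xl: (x \in s l); rewrite /= => yl.
  by exists l => //; split; rewrite ?xl //; left.
have [l' l'J sl'] := closedJ l lJ.
by exists l' => //; rewrite sl' !inE xl yl; split => //; right.
Qed.

Lemma separating_points (J : {set V}) w : complement_closed J -> w \in J ->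
  exists x y, [/\ x \in s w, y \notin s w &
    {in J, forall v, s v != s w -> s v != ~: s w -> (x \in s v) = (y \in s v)}].
Proof.
move=> closedJ wJ.
(* Take a separated pair with the fewest separating members; another separator l0
   is removed by trading x or y for the majority point of x, y and a point
   distinguishing w from l0. *)
pose gap (p : K * K) := [set v in J | (p.1 \in s v) != (p.2 \in s v)].
pose sep (p : K * K) := (p.1 \in s w) && (p.2 \notin s w).
have [x0 x0w] := exists_mem w; have [y0 y0w] := exists_nmem w.
have /(_ (x0, y0)) [] := @arg_minnP _ _ sep (fun p => #|gap p|); first exact/andP.
case=> x y /andP[/= xw yw] gap_min.
exists x, y; split=> // l lJ lw lw'; apply/eqP/negPn/negP => xyl.
have [l0 l0J [sl0 xl0 yl0]] := orient_separator closedJ lJ xyl.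
have l0w : s w != s l0.
  rewrite eq_sym; case: sl0 => ->; first exact: lw.
  by apply: contra lw' => /eqP <-; rewrite setCK.
have [z zwl0] := exists_sep l0w.
have [t tmaj] := majority_point x y z closedJ.
have t_agree v : v \in J -> (x \in s v) = (y \in s v) -> (t \in s v) = (x \in s v).
  by move=> vJ xy; rewrite tmaj // -xy /majority; case: (x \in s v); case: (z \in s v).
have gap_shrinks (q : K * K) : sep q -> {subset gap q <= gap (x, y)} -> l0 \notin gap q -> False.
  move=> sep_q sub_q l0q; have := gap_min q sep_q; rewrite leqNgt => /negP; apply.
  apply: proper_card; apply/properP; split; first exact/subsetP.
  by exists l0; rewrite // inE l0J /= xl0 yl0.
have tw := tmaj w wJ; have tl0 := tmaj l0 l0J.
rewrite /majority xw (negbTE yw) xl0 (negbTE yl0) /= !orbF in tw tl0.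
have zl0 : (z \in s l0) = ~~ (z \in s w).
  by move: zwl0; case: (z \in s w); case: (z \in s l0).
case zw: (z \in s w); rewrite zw /= in tw zl0.
- apply: (gap_shrinks (t, y)); first by rewrite /sep /= tw yw.
    move=> v; rewrite !inE => /andP[vJ tyv]; rewrite vJ; apply: contra tyv => /eqP xy.
    by rewrite (t_agree v vJ xy) xy.
  by rewrite inE /= tl0 zl0 (negbTE yl0) andbF.
- apply: (gap_shrinks (x, t)); first by rewrite /sep /= tw xw.
    move=> v; rewrite !inE => /andP[vJ xtv]; rewrite vJ; apply: contra xtv => /eqP xy.
    by rewrite (t_agree v vJ xy).
  by rewrite inE /= tl0 zl0 xl0 andbF.
Qed.

Lemma trace_sub (J J' : {set V}) x : J' \subset J -> trace J' x = trace J x :&: J'.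
Proof.
move=> sJ'J; apply/setP => v; rewrite !inE.
by case vJ': (v \in J'); rewrite ?andbF ?andbT ?(subsetP sJ'J _ vJ').
Qed.

Lemma ntraces_removeD2 (J : {set V}) w w' :
  complement_closed J -> w \in J -> s w' = ~: s w ->
  ntraces (J :\: [set w; w']) < ntraces J.
Proof.
move=> closedJ wJ sw'.
have [x [y [xw yw agree]]] := separating_points closedJ wJ.
rewrite /ntraces; set J' := J :\: [set w; w'].
have -> : [set trace J' z | z : K] = [set S :&: J' | S in [set trace J z | z : K]].
  by rewrite -imset_comp; apply: eq_imset => z; rewrite /= (trace_sub _ (subsetDl J _)).
rewrite ltn_neqAle leq_imset_card andbT; apply/negP => /imset_injP trJ'_inj.
have /setP/(_ w) : trace J x = trace J y.
  apply: trJ'_inj; rewrite ?imset_f //; apply/setP => v; rewrite !inE.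
  case: (boolP (v == w)) => [/eqP->|vw]; rewrite ?andbF //.
  case: (boolP (v == w')) => [/eqP->|vw']; rewrite ?andbF //=.
  case: (boolP (v \in J)) => vJ; rewrite ?andbF //=.
  by rewrite agree // ?(inj_eq s_inj) // -sw' (inj_eq s_inj).
by rewrite !inE wJ xw (negbTE yw).
Qed.

Lemma complement_closed0 : complement_closed set0.
Proof. by move=> v; rewrite inE. Qed.

Lemma complement_closedU (J1 J2 : {set V}) :
  complement_closed J1 -> complement_closed J2 -> complement_closed (J1 :|: J2).
Proof.
move=> closedJ1 closedJ2 v; rewrite inE.
by case/orP=> [/closedJ1|/closedJ2] [v' v'J sv']; exists v'; rewrite // inE v'J ?orbT.
Qed.

Lemma complement_closed_pair w w' : s w' = ~: s w -> complement_closed [set w; w'].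
Proof.
move=> sw' v; rewrite !inE => /orP[] /eqP->;
  by [exists w'; rewrite // !inE eqxx orbT | exists w; rewrite ?inE ?eqxx // sw' setCK].
Qed.

Lemma complement_closedD2 (J : {set V}) w w' : complement_closed J -> s w' = ~: s w ->
  complement_closed (J :\: [set w; w']).
Proof.
move=> closedJ sw' v; rewrite !inE negb_or => /andP[/andP[vw vw'] vJ].
have [v' v'J sv'] := closedJ v vJ; exists v' => //.
rewrite !inE v'J andbT negb_or; apply/andP; split.
  by apply: contra vw' => /eqP v'w; apply/eqP/s_inj; rewrite sw' -v'w sv' setCK.
by apply: contra vw => /eqP v'w'; apply/eqP/s_inj/setC_inj; rewrite -sv' -sw' v'w'.
Qed.

Lemma card_pair_through x w w' : s w' = ~: s w -> #|[set w; w'] :&: through x| <= 1.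
Proof.
move=> sw'; rewrite -(cards1 (if x \in s w then w else w')); apply: subset_leq_card.
apply/subsetP => v; rewrite !inE => /andP[/orP[] /eqP-> xv]; first by rewrite xv.
by move: xv; rewrite sw' inE => /negbTE ->.
Qed.

Lemma leq_ntraces_add x (J J' : {set V}) :
  complement_closed J -> complement_closed J' -> J \subset J' ->
  ntraces J + #|(J' :\: J) :&: through x| <= ntraces J'.
Proof.
move=> closedJ; have [n] := ubnP #|J'|.
elim: n J' => // n IH J' /ltnSE-leJ'n closedJ' sJJ'.
have [J'J | [w]] := set_0Vmem (J' :\: J).
  have -> : J' = J by apply/eqP; rewrite eqEsubset sJJ' andbT -setD_eq0 J'J.
  by rewrite setDv set0I cards0 addn0.
rewrite inE => /andP[wJ wJ'].
have [w' w'J' sw'] := closedJ' w wJ'.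
have w'J : w' \notin J.
  apply: contra wJ => /closedJ [v vJ]; rewrite sw' setCK => /s_inj sv.
  by rewrite -sv.
set J'' := J' :\: [set w; w'].
have sJJ'' : J \subset J''.
  apply/subsetP => v vJ; rewrite !inE (subsetP sJJ' _ vJ) andbT.
  by apply/norP; split; apply: contraTneq vJ => ->.
have ltJ''n : #|J''| < n.
  apply: leq_trans leJ'n; apply: proper_card; apply/properP; split; first exact: subsetDl.
  by exists w; rewrite // !inE eqxx.
have := IH J'' ltJ''n (complement_closedD2 closedJ' sw') sJJ''.
have := ntraces_removeD2 closedJ' wJ' sw'.
have := card_pair_through x sw'.
have : #|(J' :\: J) :&: through x| <=
       #|(J'' :\: J) :&: through x| + #|[set w; w'] :&: through x|.
  apply: leq_trans (leq_card_setU _ _); apply: subset_leq_card.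
  apply/subsetP => v; rewrite !inE.
  by case: (v == w); case: (v == w'); case: (v \in J); case: (v \in J'); case: (x \in s v).
rewrite -/J''; lia.
Qed.

Lemma mem_paired v u : s u = ~: s v -> v \in paired.
Proof. by move=> su; rewrite inE; apply/existsP; exists u; rewrite su. Qed.

Lemma complement_closed_paired : complement_closed paired.
Proof.
move=> v; rewrite inE => /existsP [u /eqP su]; exists u => //.
by apply: (mem_paired (u := v)); rewrite su setCK.
Qed.

Lemma card_points_gt0 : 0 < #|K|.
Proof.
have [|x _] := s_helly (P := set0); first by move=> u; rewrite inE.
by apply/card_gt0P; exists x.
Qed.

Lemma ntraces_gt0 J : 0 < ntraces J.
Proof.
have /card_gt0P [x _] := card_points_gt0.
by apply/card_gt0P; exists (trace J x); apply: imset_f.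
Qed.

Lemma ntraces_le J : ntraces J <= #|K|.
Proof. exact: leq_imset_card. Qed.

Lemma ntraces_paired x : #|paired :&: through x| < ntraces paired.
Proof.
have := leq_ntraces_add x complement_closed0 complement_closed_paired (sub0set _).
by rewrite setD0; have := ntraces_gt0 set0; lia.
Qed.

Lemma mixed_not_realized w w' l l' l2 v :
  s w' = ~: s w -> s l \proper s w -> s l' = ~: s l -> s l2 \proper s w' ->
  s v != s l :|: (s w' :\: s l2).
Proof.
move=> sw' /properP [slw [a2 a2w a2l]] sl' /properP [_ [b1 b1w' b1l2]].
apply/eqP => sv; have [a1 a1l] := exists_mem l.
have b1l : b1 \notin s l.
  by apply/negP => /(subsetP slw); move: b1w'; rewrite sw' inE => /negbTE ->.
have [|||t [tv tw tl']] := helly3 (a := v) (b := w) (c := l') (x := a1) (y := b1) (z := a2).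
- by rewrite inE sv !inE a1l (subsetP slw).
- by rewrite inE sv sl' !inE b1w' b1l2 b1l orbT.
- by rewrite inE sl' inE a2w a2l.
by move: tv; rewrite sl' inE in tl'; rewrite sv !inE (negbTE tl') sw' inE tw andbF.
Qed.

Section Counting.
Variable x0 : K.

Definition code (X : {set K}) := if x0 \in X then ~: X else X.

Definition codes := [set X : {set K} | (X \subset [set~ x0]) && (X != set0)].

Lemma code_in_codes X : X != set0 -> X != setT -> code X \in codes.
Proof.
move=> X0 XT; rewrite inE /code; case: ifP => x0X; apply/andP; split => //.
- by rewrite subCset setCK sub1set.
- by rewrite -subset0 subCset setC0 subTset.
- by rewrite subsetC sub1set inE x0X.
Qed.

Lemma code_eq X Y : code X = code Y -> X = Y \/ X = ~: Y.
Proof.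
rewrite /code; case: ifP => _; case: ifP => _ => eqXY;
  by [left; apply: setC_inj | right; rewrite -eqXY setCK | right | left].
Qed.

Lemma card_codes : #|codes| = 2 ^ (#|K| - 1) - 1.
Proof.
have -> : codes = powerset [set~ x0] :\ set0 by apply/setP => X; rewrite !inE andbC.
have := cardsD1 set0 (powerset [set~ x0]).
by rewrite card_powerset cardsC1 powersetE sub0set -subn1 add1n => ->; rewrite subn1.
Qed.

Lemma image_code_sub : [set code (s v) | v : V] \subset codes.
Proof. by apply/subsetP => _ /imsetP [v _ ->]; exact: code_in_codes. Qed.

Lemma card_le_codes : #|V| <= #|[set code (s v) | v : V]| + #|paired :&: through x0|.
Proof.
pose A := [set code (s v) | v in ~: through x0].
pose B := [set code (s v) | v in through x0].
have codeA : {in ~: through x0, code \o s =1 s}.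
  by move=> v; rewrite !inE /code /= => /negbTE ->.
have codeB : {in through x0, code \o s =1 fun v => ~: s v}.
  by move=> v; rewrite !inE /code /= => ->.
have cardA : #|A| = #|~: through x0|.
  by rewrite /A (eq_in_imset codeA) card_imset.
have cardB : #|B| = #|through x0|.
  by rewrite /B (eq_in_imset codeB) card_imset // => u v /setC_inj /s_inj.
have AIB : #|A :&: B| <= #|paired :&: through x0|.
  apply: leq_trans (leq_imset_card (fun v => ~: s v) _); apply: subset_leq_card.
  apply/subsetP => X; rewrite inE => /andP[/imsetP [u uA ->] /imsetP [v vB]].
  move: (codeA u uA) (codeB v vB) => /= -> -> suv; apply/imsetP; exists v => //.
  by rewrite inE vB andbT (mem_paired suv).
have -> : [set code (s v) | v : V] = A :|: B.
  rewrite -imsetU setUC setUCr.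
  by apply/setP => X; apply/imsetP/imsetP => -[v _ ->]; exists v.
have := cardsUI A B; have := cardsC (through x0); lia.
Qed.

Lemma card_le_bound : #|V| <= 2 ^ (#|K| - 1) + #|K| - 2.
Proof.
have := card_le_codes; have := ntraces_paired x0; have := ntraces_le paired.
have := subset_leq_card image_code_sub; rewrite card_codes.
have := card_points_gt0; have : 0 < 2 ^ (#|K| - 1) by rewrite expn_gt0.
lia.
Qed.

Section Extremal.
Hypothesis card_V : #|V| = 2 ^ (#|K| - 1) + #|K| - 2.

Lemma extremal_counts :
  [/\ [set code (s v) | v : V] = codes,
      #|paired :&: through x0| = #|K| - 1 & ntraces paired = #|K|].
Proof.
have := card_le_codes; have := ntraces_paired x0; have := ntraces_le paired.
have := subset_leq_card image_code_sub; rewrite card_codes.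
have := card_points_gt0; have : 0 < 2 ^ (#|K| - 1) by rewrite expn_gt0.
move=> *; split; try lia.
by apply/eqP; rewrite eqEcard image_code_sub card_codes; lia.
Qed.

Lemma realized_or_complement X : X != set0 -> X != setT ->
  exists v, s v = X \/ s v = ~: X.
Proof.
move=> X0 XT; have [img _ _] := extremal_counts.
have := code_in_codes X0 XT; rewrite -img => /imsetP [v _ /esym/code_eq sv].
by exists v.
Qed.

Lemma trace_paired_inj : injective (trace paired).
Proof.
have [_ _ ntr] := extremal_counts.
have /imset_injP tr_inj : #|[set trace paired x | x : K]| == #|K|.
  by rewrite -/(ntraces paired) ntr.
by move=> x y; apply: tr_inj.
Qed.

Lemma paired_compatible w l : w \in paired -> l \in paired ->
  ~ (forall b c : bool, exists x, (x \in s w) = b /\ (x \in s l) = c).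
Proof.
move=> wP lP quadrants.
(* leq_ntraces_add is tight on paired, leaving only three traces for two pairs. *)
have [w' w'P sw'] := complement_closed_paired wP.
have [l' l'P sl'] := complement_closed_paired lP.
pose J := [set w; w'] :|: [set l; l'].
have closedJ : complement_closed J.
  exact: complement_closedU (complement_closed_pair sw') (complement_closed_pair sl').
have sJP : J \subset paired.
  by apply/subsetP => v; rewrite in_setU !in_set2 -!orbA => /or4P[] /eqP->.
have wJ : w \in J by rewrite !inE eqxx.
have lJ : l \in J by rewrite !inE eqxx !orbT.
have four : #|[set: bool * bool]| <= ntraces J.
  pose g (S : {set V}) := (w \in S, l \in S).
  apply: leq_trans (leq_imset_card g _); apply: subset_leq_card.
  apply/subsetP => -[b c] _; have [x [xw xl]] := quadrants b c.
  by apply/imsetP; exists (trace J x); rewrite ?imset_f // /g !in_trace wJ lJ xw xl.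
have JH : #|J :&: through x0| <= 2.
  rewrite setIUl; apply: leq_trans (leq_card_setU _ _) _.
  exact: leq_add (card_pair_through x0 sw') (card_pair_through x0 sl').
have PH : #|paired :&: through x0| <=
          #|(paired :\: J) :&: through x0| + #|J :&: through x0|.
  apply: leq_trans (leq_card_setU _ _); apply: subset_leq_card; apply/subsetP => v.
  rewrite in_setU !in_setI in_setD.
  by case: (v \in J); case: (v \in paired); case: (v \in through x0).
have := leq_ntraces_add x0 closedJ complement_closed_paired sJP.
have [_ cardPH ntrP] := extremal_counts.
move: four; rewrite cardsT card_prod card_bool.
have := card_points_gt0; lia.
Qed.

Lemma exists_proper_sub w : w \in paired -> 1 < #|s w| ->
  exists2 l, l \in paired & s l \proper s w.
Proof.
move=> wP /card_gt1P [a [a' [aw a'w aa']]].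
have [l lP sep] : exists2 l, l \in paired & (a \in s l) != (a' \in s l).
  apply/exists_inP; apply: contraNT aa' => /exists_inPn same.
  apply/eqP/trace_paired_inj/setP => v; rewrite !in_trace.
  by case: (v \in paired) (same v) => //= /(_ isT) /negbNE /eqP.
have [l0 l0P [_ al0 /negbTE a'l0]] := orient_separator complement_closed_paired lP sep.
have [l0' l0'P sl0'] := complement_closed_paired l0P.
case: (boolP [exists x, (x \notin s w) && (x \in s l0)]) => [|/existsPn out_l0].
  case/existsP=> b /andP[/negbTE bw bl0].
  case: (boolP [exists x, (x \notin s w) && (x \notin s l0)]) => [|/existsPn out_l0'].
    case/existsP=> b' /andP[/negbTE b'w /negbTE b'l0].
    by case: (paired_compatible wP l0P) => -[] [];
      [exists a | exists a' | exists b | exists b'].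
  exists l0' => //; apply/properP; split; last by exists a; rewrite // sl0' inE al0.
  apply/subsetP => x; rewrite sl0' inE; apply: contraR => xw.
  by move: (out_l0' x); rewrite xw /= negbK.
exists l0 => //; apply/properP; split; last by exists a'; rewrite // a'l0.
by apply/subsetP => x xl0; apply: contraR (out_l0 x) => xw; rewrite xw.
Qed.

Lemma paired_single_side w : w \in paired -> (#|s w| <= 1) || (#|~: s w| <= 1).
Proof.
move=> wP; case: leqP => //= big_w; rewrite leqNgt; apply/negP => big_w'.
have [w' w'P sw'] := complement_closed_paired wP.
rewrite -sw' in big_w'.
have [l lP ltlw] := exists_proper_sub wP big_w.
have [l2 l2P ltl2w'] := exists_proper_sub w'P big_w'.
have [l' _ sl'] := complement_closed_paired lP.
have [l2' _ sl2'] := complement_closed_paired l2P.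
have sw : s w = ~: s w' by rewrite sw' setCK.
have compX : ~: (s l :|: (s w' :\: s l2)) = s l2 :|: (s w :\: s l).
  have [sl sl2] := (proper_sub ltlw, proper_sub ltl2w').
  apply/setP => x; rewrite !inE sw' inE.
  case xw: (x \in s w) => /=.
    have /negbTE-> : x \notin s l2 by apply/negP => /(subsetP sl2); rewrite sw' inE xw.
    by rewrite andbF andbT orbF.
  have /negbTE-> : x \notin s l by apply: contraFN xw => /(subsetP sl).
  by rewrite andbT andbF orbF negbK.
have [a1 a1l] := exists_mem l.
have /properP [_ [a2 a2w a2l]] := ltlw.
have [||v [sv|sv]] := realized_or_complement (X := s l :|: (s w' :\: s l2)).
- by apply/set0Pn; exists a1; rewrite inE a1l.
- apply/negP => /eqP XT; have := in_setT a2; rewrite -XT !inE (negbTE a2l) sw' inE a2w.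
  by rewrite andbF.
- by move: (mixed_not_realized v sw' ltlw sl' ltl2w'); rewrite sv eqxx.
- by move: (mixed_not_realized v sw ltl2w' sl2' ltlw); rewrite sv compX eqxx.
Qed.

Definition singles := [set i | [exists v in paired, s v == [set i]]].

Lemma card_paired_through_le : #|paired :&: through x0| <= #|singles|.
Proof.
pose small v := if #|s v| <= 1 then s v else ~: s v.
have small_inj : {in paired :&: through x0 &, injective small}.
  move=> u v; rewrite !inE => /andP[_ x0u] /andP[_ x0v]; rewrite /small.
  case: ifP => _; case: ifP => _ => suv;
    [exact: s_inj | by move: x0u; rewrite suv inE x0v
    | by move: x0v; rewrite -suv inE x0u | exact/s_inj/setC_inj].
rewrite -(card_in_imset small_inj) -(card_imset singles (@set1_inj K)).
apply: subset_leq_card; apply/subsetP => _ /imsetP [v /setIP[vP _] ->].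
have single (X : {set K}) : X != set0 -> #|X| <= 1 -> exists i, X = [set i].
  by move=> X0 X1; apply/cards1P; rewrite eqn_leq X1 card_gt0.
rewrite /small; case: ifPn => [small_v | /negPf big_v].
  have [i svi] := single _ (s_neq0 v) small_v.
  by rewrite svi imset_f // inE; apply/exists_inP; exists v; rewrite ?svi.
have [u uP su] := complement_closed_paired vP.
have [||i svi] := single (~: s v); first by rewrite -su s_neq0.
  by move: (paired_single_side vP); rewrite big_v.
by rewrite svi imset_f // inE; apply/exists_inP; exists u; rewrite ?su ?svi.
Qed.

Lemma exists_center : exists c, [set~ c] \subset singles.
Proof.
have [_ cardPH _] := extremal_counts; have := card_paired_through_le.
rewrite cardPH; case: (boolP (setT \subset singles)) => [sTS _ | /subsetPn [c _ cS] le].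
  by exists x0; exact: subset_trans (subsetT _) sTS.
exists c; have sSc : singles \subset [set~ c].
  by apply/subsetP => i iS; rewrite !inE; apply: contraNneq cS => <-.
suff -> : [set~ c] = singles by [].
by apply/eqP; rewrite eq_sym eqEcard sSc cardsC1 -subn1.
Qed.

Section Center.
Variable c : K.
Hypothesis singles_c : [set~ c] \subset singles.

Lemma single_realized i : i != c -> exists2 v, v \in paired & s v = [set i].
Proof.
move=> ic; have : i \in singles by apply: (subsetP singles_c); rewrite !inE.
by rewrite inE => /exists_inP [v vP /eqP sv]; exists v.
Qed.

Lemma cosingle_realized i : i != c -> exists u, s u = ~: [set i].
Proof.
move=> /single_realized [v vP sv]; have [u _ su] := complement_closed_paired vP.
by exists u; rewrite su sv.
Qed.

Lemma avoid_center_small v : c \notin s v -> #|s v| <= 1.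
Proof.
move=> cv; rewrite leqNgt; apply/card_gt1P => -[p [q [pv qv pq]]].
have cy y : y \in s v -> c != y by move=> yv; apply: contraNneq cv => ->.
have other y : y \in s v -> exists2 x, x \in s v & x != y.
  by case: (eqVneq p y) => [<- _|py _]; [exists q; rewrite // eq_sym | exists p].
pose P := v |: [set u | [exists y in s v, s u == ~: [set y]]].
have [|t tP] := s_helly (P := P).
  move=> u1 u2; rewrite !inE => /orP[/eqP-> | /exists_inP [y1 y1v /eqP su1]]
    /orP[/eqP-> | /exists_inP [y2 y2v /eqP su2]]; apply/set0Pn.
  - by exists p; rewrite setIid.
  - by have [x xv xy] := other y2 y2v; exists x; rewrite inE su2 !inE xv xy.
  - by have [x xv xy] := other y1 y1v; exists x; rewrite inE su1 !inE xv xy.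
  - by exists c; rewrite inE su1 su2 !inE eq_sym cy // eq_sym cy.
have tv : t \in s v by apply: tP; rewrite !inE eqxx.
have tc : t != c by rewrite eq_sym cy.
have [u su] := cosingle_realized tc.
have : t \in s u.
  by apply: tP; rewrite !inE; apply/orP; right; apply/exists_inP; exists t; rewrite ?su.
by rewrite su !inE eqxx.
Qed.

Lemma avoid_center_single v : c \notin s v -> exists2 i, i != c & s v = [set i].
Proof.
move=> cv; have /cards1P [i svi] : #|s v| == 1.
  by rewrite eqn_leq avoid_center_small // card_gt0 s_neq0.
by exists i => //; apply: contraNneq cv => <-; rewrite svi set11.
Qed.

Lemma center_realized (A : {set K}) : c \in A -> A != setT -> exists v, s v = A.
Proof.
move=> cA AT; have A0 : A != set0 by apply/set0Pn; exists c.
have [v [sv|sv]] := realized_or_complement A0 AT; first by exists v.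
have cv : c \notin s v by rewrite sv inE cA.
have [i ic svi] := avoid_center_single cv.
by have [u su] := cosingle_realized ic; exists u; rewrite su -svi sv setCK.
Qed.

End Center.

End Extremal.

End Counting.

Theorem helly_card_le : #|V| <= 2 ^ (#|K| - 1) + #|K| - 2.
Proof. by have /card_gt0P [x0 _] := card_points_gt0; exact: card_le_bound x0. Qed.

Theorem helly_extremal : #|V| = 2 ^ (#|K| - 1) + #|K| - 2 ->
  exists c, [/\ forall i, i != c -> exists v, s v = [set i],
     forall A : {set K}, c \in A -> A != setT -> exists v, s v = A &
     forall v, c \notin s v -> exists2 i, i != c & s v = [set i]].
Proof.
move=> card_V; have /card_gt0P [x0 _] := card_points_gt0.
have [c singles_c] := exists_center x0 card_V.
exists c; split.
- by move=> i /(single_realized singles_c) [v _]; exists v.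
- exact: center_realized singles_c.
- exact: avoid_center_single singles_c.
Qed.

End HellyFamily.

Section MaximalIndependentSets.
Variables (T : finType) (e : rel T).
Hypotheses (e_sym : symmetric e) (e_irr : irreflexive e).

Definition mis : finType := {M : {set T} | maxset (independent e) M}.

Definition mis_of (v : T) : {set mis} := [set M : mis | v \in val M].

Lemma card_mis : #|mis| = imax e.
Proof. by rewrite card_sig /imax cardsE. Qed.

Lemma independentP (A : {set T}) :
  reflect {in A &, forall x y, ~~ e x y} (independent e A).
Proof.
apply: (iffP forall_inP) => [indepA x y /indepA /forall_inP | indepA x xA]; first exact.
by apply/forall_inP => y; apply: indepA.
Qed.

Lemma independent1 v : independent e [set v].
Proof. by apply/independentP => x y; rewrite !inE => /eqP-> /eqP->; rewrite e_irr. Qed.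

Lemma independent2 u v : ~~ e u v -> independent e [set u; v].
Proof.
move=> nuv; apply/independentP => x y; rewrite !inE => /orP[] /eqP-> /orP[] /eqP->;
  by rewrite ?e_irr // e_sym.
Qed.

Lemma mis_independent (M : mis) : independent e (val M).
Proof. by case: M => M /= /maxsetP[]. Qed.

Lemma extend_mis (A : {set T}) : independent e A -> exists M : mis, A \subset val M.
Proof. by move=> indepA; have [M maxM sAM] := maxset_exists indepA; exists (exist _ M maxM). Qed.

Lemma adjacentE u v : e u v = (mis_of u :&: mis_of v == set0).
Proof.
apply/idP/idP => [euv | ].
  apply/eqP/setP => M; rewrite !inE; apply/negP => /andP[uM vM].
  by have /independentP/(_ u v uM vM) := mis_independent M; rewrite euv.
apply: contraLR => nuv; have [M sM] := extend_mis (independent2 nuv).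
by apply/set0Pn; exists M; rewrite !inE !(subsetP sM) ?inE ?eqxx ?orbT.
Qed.

Lemma mis_of_neq0 v : mis_of v != set0.
Proof.
have [M sM] := extend_mis (independent1 v).
by apply/set0Pn; exists M; rewrite inE (subsetP sM) ?set11.
Qed.

Lemma mis_of_helly (P : {set T}) :
  {in P &, forall u v, mis_of u :&: mis_of v != set0} ->
  exists M, forall v, v \in P -> M \in mis_of v.
Proof.
move=> meet; have [|M sPM] := extend_mis (A := P).
  by apply/independentP => x y xP yP; rewrite adjacentE meet.
by exists M => v vP; rewrite inE (subsetP sPM).
Qed.

Lemma mis_of_inj : twin_free e -> injective mis_of.
Proof. by move=> tf u v muv; apply: tf; apply/setP => w; rewrite !inE !adjacentE muv. Qed.

Lemma exists_neighbour v : connected_graph e -> 1 < imax e -> exists w, e v w.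
Proof.
move=> conn; rewrite -card_mis => mis_gt1; apply/existsP.
apply: contraTT mis_gt1 => /existsPn isolated.
have only_v u : u = v.
  have /connectP [[|w p] /= path_vu ->] := conn v u; first by [].
  by move: path_vu; rewrite (negbTE (isolated w)).
have mis_top (M : mis) : val M = setT.
  case: M => M /maxsetP [_ maxM] /=; apply/esym/maxM; last exact: subsetT.
  by apply/independentP => x y; rewrite (only_v x) (only_v y) e_irr.
by rewrite -leqNgt; apply/card_le1_eqP => M M' _ _; apply: val_inj; rewrite !mis_top.
Qed.

Lemma mis_of_neqT : connected_graph e -> 1 < imax e -> forall v, mis_of v != setT.
Proof.
move=> conn mis_gt1 v; have [w evw] := exists_neighbour v conn mis_gt1.
have [M sM] := extend_mis (independent1 w).
apply/negP => /eqP vT; have : M \in mis_of v by rewrite vT inE.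
rewrite inE => vM; have /independentP indepM := mis_independent M.
by move: (indepM v w vM (subsetP sM w (set11 w))); rewrite evw.
Qed.

Section TwinFreeConnected.
Hypothesis tf : twin_free e.
Hypothesis conn : connected_graph e.
Hypothesis imax_gt1 : 1 < imax e.

Lemma card_le_mis : #|T| <= 2 ^ (#|mis| - 1) + #|mis| - 2.
Proof.
exact: helly_card_le (mis_of_inj tf) mis_of_neq0 (mis_of_neqT conn imax_gt1) mis_of_helly.
Qed.

Section Center.
Variable c : mis.
Hypothesis realized_single : forall i, i != c -> exists v, mis_of v = [set i].
Hypothesis realized_center :
  forall A : {set mis}, c \in A -> A != setT -> exists v, mis_of v = A.
Hypothesis realized_off_center :
  forall v, c \notin mis_of v -> exists2 i, i != c & mis_of v = [set i].

Definition outside := [set v | c \notin mis_of v].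

Lemma adjacent_single v y i : mis_of y = [set i] -> e v y = (i \notin mis_of v).
Proof. by move=> yi; rewrite adjacentE yi setIC setI_eq0 disjoints1. Qed.

Lemma adjacent_center u v : c \in mis_of u -> c \in mis_of v -> e u v = false.
Proof. by move=> cu cv; rewrite adjacentE; apply/negbTE/set0Pn; exists c; rewrite inE cu cv. Qed.

Lemma mis_of_nbhd v : c \in mis_of v -> mis_of v = ~: \bigcup_(y in nbhd e v) mis_of y.
Proof.
move=> cv; apply/setP => i; rewrite in_setC; apply/idP/idP => [iv | ni].
  apply/negP => /bigcupP [y]; rewrite inE adjacentE => /eqP/setP/(_ i).
  by rewrite in_setI iv in_set0 /= => ->.
apply: contraR ni => niv; have ic : i != c by apply: contraNneq niv => ->.
have [y yi] := realized_single ic; apply/bigcupP; exists y; last by rewrite yi set11.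
by rewrite inE (adjacent_single v yi).
Qed.

Lemma mem_bigcup_outside (S : {set T}) y i : S \subset outside -> mis_of y = [set i] ->
  (i \in \bigcup_(w in S) mis_of w) = (y \in S).
Proof.
move=> Sout yi; apply/bigcupP/idP => [[w wS iw] | yS]; last by exists y; rewrite // yi set11.
have cw : c \notin mis_of w by move: (subsetP Sout w wS); rewrite inE.
have [j _ wj] := realized_off_center cw.
suff -> : y = w by [].
by apply: (mis_of_inj tf); rewrite yi wj; move: iw; rewrite wj => /set1P->.
Qed.

Lemma card_outside : #|outside| = #|mis| - 1.
Proof.
rewrite -(card_imset _ (mis_of_inj tf)).
have -> : [set mis_of v | v in outside] = [set [set i] | i in [set~ c]].
  apply/setP => X; apply/imsetP/imsetP => [[v vout ->] | [i ic ->]].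
    rewrite inE in vout; have [i ic vi] := realized_off_center vout.
    by exists i; rewrite // !inE.
  rewrite !inE in ic; have [v vi] := realized_single ic.
  by exists v; rewrite // inE vi inE eq_sym.
by rewrite (card_imset _ (@set1_inj _)) cardsC1 subn1.
Qed.

Lemma outside_clique : is_clique e outside.
Proof.
apply/forall_inP => x; rewrite inE => /realized_off_center [i _ xi].
apply/forall_inP => y; rewrite inE => /realized_off_center [j _ yj].
apply/implyP => xy; rewrite (adjacent_single x yj) xi inE.
by apply: contra xy => /eqP ji; apply/eqP/(mis_of_inj tf); rewrite xi yj ji.
Qed.

Lemma nbhd_outside v : v \notin outside -> nbhd e v \subset outside /\ nbhd e v != set0.
Proof.
rewrite inE negbK => cv; split.
  apply/subsetP => w; rewrite [w \in nbhd e v]inE => evw; rewrite inE.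
  by apply: contraL evw => cw; rewrite (adjacent_center cv cw).
have /subsetPn [i _ iv] : ~~ (setT \subset mis_of v).
  by rewrite subTset (mis_of_neqT conn imax_gt1).
have ic : i != c by apply: contraNneq iv => ->.
have [y yi] := realized_single ic.
by apply/set0Pn; exists y; rewrite inE (adjacent_single v yi).
Qed.

Lemma unique_attachment (S : {set T}) : S \subset outside -> S != set0 ->
  exists! v, v \notin outside /\ nbhd e v = S.
Proof.
move=> Sout S0; pose X := ~: \bigcup_(w in S) mis_of w.
have cX : c \in X.
  rewrite inE; apply/bigcupP => -[w wS]; apply/negP.
  by move: (subsetP Sout w wS); rewrite inE.
have XT : X != setT.
  have [w wS] := set0Pn _ S0.
  have cw : c \notin mis_of w by move: (subsetP Sout w wS); rewrite inE.
  have [i _ wi] := realized_off_center cw.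
  apply/negP => /eqP XT; have := in_setT i.
  by rewrite -XT in_setC (mem_bigcup_outside Sout wi) wS.
have [v vX] := realized_center cX XT.
have vout : v \notin outside by rewrite inE negbK vX.
exists v; split.
  split => //; apply/setP => y; rewrite inE.
  case yout: (y \in outside).
    move: (yout); rewrite inE => /realized_off_center [i _ yi].
    by rewrite (adjacent_single v yi) vX inE negbK (mem_bigcup_outside Sout yi).
  rewrite adjacent_center ?vX //; last by move: yout; rewrite inE => /negbFE.
  by apply/esym/negbTE; apply: contraFN yout => /(subsetP Sout).
move=> v' [v'out v'S]; apply: (mis_of_inj tf).
rewrite vX (mis_of_nbhd (_ : c \in mis_of v')) ?v'S //.
by move: v'out; rewrite inE negbK.
Qed.

Lemma outside_clique_with_all_subsets : clique_with_all_subsets e outside.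
Proof. split; [exact: outside_clique | exact: nbhd_outside | exact: unique_attachment]. Qed.

End Center.

Lemma extremal_clique : #|T| = 2 ^ (#|mis| - 1) + #|mis| - 2 ->
  exists C : {set T}, #|C| = #|mis| - 1 /\ clique_with_all_subsets e C.
Proof.
case/(helly_extremal (mis_of_inj tf) mis_of_neq0 (mis_of_neqT conn imax_gt1) mis_of_helly).
move=> c [realized_single realized_center realized_off_center].
exists (outside c); split; first exact: card_outside realized_single realized_off_center.
exact: outside_clique_with_all_subsets realized_single realized_center realized_off_center.
Qed.

End TwinFreeConnected.

End MaximalIndependentSets.

Theorem theorem1p2 (k : nat) (T : finType) (e : rel T) :
  2 <= k ->
  symmetric e -> irreflexive e ->
  connected_graph e -> twin_free e -> imax e = k ->
  #|T| <= 2 ^ (k - 1) + k - 2 /\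
  (#|T| = 2 ^ (k - 1) + k - 2 ->
     exists C : {set T}, #|C| = k - 1 /\ clique_with_all_subsets e C).
Proof.
move=> k_ge2 e_sym e_irr conn tf imax_k.
have imax_gt1 : 1 < imax e by rewrite imax_k.
rewrite -imax_k -card_mis; split; first exact: card_le_mis.
exact: extremal_clique.
Qed.
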